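(* Let $a^*\in A$ be a pure strategy profile of $G$. If for every $\bar p\in(0,1)$ there exists $p\in(0,\bar p)$ such that $a^*$ is stable for the degree of observability $p$, then $a^*$ is a Nash equilibrium of $G$.
   Context: Objective game: $G=(N,A,\pi)$ is a finite $n$-player normal-form game, $N=\{1,\dots,n\}$, finite action sets $A_i$, $A=\prod_iA_i$, fitness functions $\pi_i:A\to\mathbb{R}$ extended multilinearly to $\prod_i\Delta(A_i)$. Preference types: $\Theta=\mathbb{R}^A$ (extended multilinearly). $\mathcal{M}(\Theta^n)$: product distributions $\mu=\mu_1\times\dots\times\mu_n$ with finitely supported marginals; $\operatorname{supp}\mu=\prod_i\operatorname{supp}\mu_i$, $\mu(\theta)=\prod_i\mu_i(\theta_i)$, $\mu_{-i}(\theta_{-i})=\prod_{j\ne i}\mu_j(\theta_j)$. Mutants: for nonempty $J\subseteq N$, $\tilde\theta_J\in\prod_{j\in J}(\Theta\setminus\operatorname{supp}\mu_j)$ with shares $\varepsilon\in(0,1)^{|J|}$, $\|\varepsilon\|=\max_j\varepsilon_j$; post-entry $\tilde\mu^\varepsilon_i=(1-\varepsilon_i)\mu_i+\varepsilon_i\delta_{\tilde\theta_i}$ for $i\in J$, $\mu_i$ otherwise. Partial observability with degree $p\in(0,1)$: each player independently observes opponents' types with probability $p$ and otherwise knows only $\mu_{-i}$. Strategies: $b:\operatorname{supp}\mu\to\prod_i\Delta(A_i)$ (play when observing) and $s_i:\operatorname{supp}\mu_i\to\Delta(A_i)$ (play when not observing), $s(\theta)=(s_i(\theta_i))_i$. For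 a matched profile $\theta$ and the set $T\subseteq N$ of non-observing players, the profile played is $(s(\theta)_T,b(\theta)_{-T})$. $(b,s)$ is an equilibrium if for all $\theta\in\operatorname{supp}\mu$ and $i$: $b_i(\theta)\in\arg\max_{\sigma_i}\sum_{T\subseteq N\setminus\{i\}}p^{n-1-|T|}(1-p)^{|T|}\theta_i(\sigma_i,(s_{-i}(\theta_{-i})_T,b_{-i}(\theta)_{-T}))$ and $s_i(\theta_i)\in\arg\max_{\sigma_i}\sum_{\theta'_{-i}}\mu_{-i}(\theta'_{-i})\sum_{T\subseteq N\setminus\{i\}}p^{n-1-|T|}(1-p)^{|T|}\theta_i(\sigma_i,(s_{-i}(\theta'_{-i})_T,b_{-i}(\theta_i,\theta'_{-i})_{-T}))$; $B_p(\mu)$ is the set of these; $(\mu,b,s)$ is a configuration. Aggregate outcome: $\varphi_{\mu,b,s}(a)=\sum_{\theta}\mu(\theta)\sum_{T\subseteq N}p^{n-|T|}(1-p)^{|T|}\prod_i(s(\theta)_T,b(\theta)_{-T})_i(a_i)$. Average fitness: $\Pi_{\theta_i}(\mu;b,s)=\sum_{\theta'_{-i}}\mu_{-i}(\theta'_{-i})\sum_{T\subseteq N}p^{n-|T|}(1-p)^{|T|}\pi_i(s(\theta_i,\theta'_{-i})_T,b(\theta_i,\theta'_{-i})_{-T})$. Balanced: equal average fitness of all types within each population. Nearby set: $B_p^\eta(\tilde\mu^\varepsilon;b,s)=\{(\tilde b,\tilde s)\in B_p(\tilde\mu^\varepsilon):\max_i\|\tilde b_i(\theta)-b_i(\theta)\|\le\eta,\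 \max_i\|\tilde s_i(\theta_i)-s_i(\theta_i)\|\le\eta\ \forall\theta\in\operatorname{supp}\mu\}$. $(\mu,b,s)$ is stable (for degree $p$) if balanced and for every nonempty $J$, every $\tilde\theta_J$, every $\eta>0$, there are $\bar\eta\in[0,\eta)$, $\bar\epsilon\in(0,1)$ such that for all $\varepsilon$ with $\|\varepsilon\|\in(0,\bar\epsilon)$, $B_p^{\bar\eta}(\tilde\mu^\varepsilon;b,s)\ne\emptyset$ and each of its elements satisfies (i) some $j\in J$ has $\Pi_{\theta_j}>\Pi_{\tilde\theta_j}$ (post-entry) for all $\theta_j\in\operatorname{supp}\mu_j$, or (ii) for every $i$ all types in $\operatorname{supp}\tilde\mu^\varepsilon_i$ have equal post-entry average fitness. A pure profile $a^*$ is stable for degree $p$ if the point mass at $a^*$ is the aggregate outcome of a stable configuration for $p$. *)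

From HB Require Import structures.
From mathcomp Require Import all_boot all_order all_algebra.
Set Implicit Arguments.
Unset Strict Implicit.
Unset Printing Implicit Defensive.
Import Order.TTheory GRing.Theory Num.Theory.
Local Open Scope ring_scope.

Section EvoGame.
Variable R : realFieldType.
Variable n : nat.
Variable A : 'I_n -> finType.
Variable pi : 'I_n -> {dffun forall i : 'I_n, A i} -> R.   (* fitness functions *)
Variable p : R.                         (* degree of observability *)

(* pure profiles, preference types Theta = R^A, type profiles *)
Local Notation prof := {dffun forall i : 'I_n, A i}.
Local Notation Theta := {ffun prof -> R}.
Local Notation tprof := ('I_n -> {ffun prof -> R}).
Local Notation mixed i := {ffun A i -> R}.
Local Notation mprof := (forall i : 'I_n, {ffun A i -> R}).

Definition is_mixed (i : 'I_n) (x : mixed i) :=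
  (forall a, 0 <= x a) /\ \sum_(a : A i) x a = 1.

Definition payoff (u : prof -> R) (tau : mprof) : R :=
  \sum_(a : prof) (\prod_(j < n) tau j (a j)) * u a.

Definition payoff_dev (u : prof -> R) (i : 'I_n) (sigma : mixed i) (tau : mprof) : R :=
  \sum_(a : prof) sigma (a i) * (\prod_(j < n | j != i) tau j (a j)) * u a.

(* A finitely supported distribution on Theta, given by its support s and
   weights w: s duplicate free, weights positive on s, summing to 1. *)
Definition is_fsdist (s : seq Theta) (w : Theta -> R) :=
  [/\ uniq s, (forall t, t \in s -> 0 < w t) & \sum_(t <- s) w t = 1].

(* a product distribution mu = mu_1 x ... x mu_n is given by S (supports)
   and w (weights) *)
Definition in_supp (S : 'I_n -> seq Theta) (th : tprof) := forall i, th i \in S i.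

Definition th0 : Theta := [ffun => 0].

Definition prof_of (S : 'I_n -> seq Theta)
  (k : {dffun forall i : 'I_n, 'I_(size (S i))}) : tprof :=
  fun i => nth th0 (S i) (k i).

Definition Emu (S : 'I_n -> seq Theta) (w : 'I_n -> Theta -> R) (f : tprof -> R) : R :=
  \sum_(k : {dffun forall i : 'I_n, 'I_(size (S i))})
     (\prod_(j < n) w j (@prof_of S k j)) * f (@prof_of S k).

Definition Emi (S : 'I_n -> seq Theta) (w : 'I_n -> Theta -> R) (i : 'I_n) (t : Theta)
  (g : tprof -> R) : R :=
  \sum_(k : {dffun forall i : 'I_n, 'I_(size (S i))} | (k i : nat) == index t (S i))
     (\prod_(j < n | j != i) w j (@prof_of S k j)) * g (@prof_of S k).

Definition mixT (T : {set 'I_n}) (b : tprof -> mprof) (s : forall i : 'I_n, Theta -> mixed i)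
  (th : tprof) : mprof :=
  fun j => if j \in T then s j (th j) else b th j.

Definition wgt1 (T : {set 'I_n}) : R := p ^+ (n.-1 - #|T|) * (1 - p) ^+ #|T|.
Definition wgt (T : {set 'I_n}) : R := p ^+ (n - #|T|) * (1 - p) ^+ #|T|.

(* objective of player i when observing, at type profile th *)
Definition Vb (b : tprof -> mprof) (s : forall i : 'I_n, Theta -> mixed i)
  (i : 'I_n) (th : tprof) (sigma : mixed i) : R :=
  \sum_(T : {set 'I_n} | i \notin T)
     wgt1 T * payoff_dev (fun a => th i a) sigma (mixT T b s th).

(* objective of player i of type t when not observing *)
Definition Vs (S : 'I_n -> seq Theta) (w : 'I_n -> Theta -> R)
  (b : tprof -> mprof) (s : forall i : 'I_n, Theta -> mixed i)
  (i : 'I_n) (t : Theta) (sigma : mixed i) : R :=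
  Emi S w i t (fun th' => Vb b s th' sigma).

Definition is_eq (S : 'I_n -> seq Theta) (w : 'I_n -> Theta -> R)
  (b : tprof -> mprof) (s : forall i : 'I_n, Theta -> mixed i) :=
  (forall th, in_supp S th -> forall i : 'I_n,
      is_mixed (b th i) /\
      forall sigma : mixed i, is_mixed sigma -> Vb b s th sigma <= Vb b s th (b th i))
  /\
  (forall (i : 'I_n) (t : Theta), t \in S i ->
      is_mixed (s i t) /\
      forall sigma : mixed i, is_mixed sigma -> Vs S w b s t sigma <= Vs S w b s t (s i t)).

Definition outcome (S : 'I_n -> seq Theta) (w : 'I_n -> Theta -> R)
  (b : tprof -> mprof) (s : forall i : 'I_n, Theta -> mixed i) (a : prof) : R :=
  Emu S w (fun th => \sum_(T : {set 'I_n}) wgt T * \prod_(j < n) mixT T b s th j (a j)).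

Definition fitness (S : 'I_n -> seq Theta) (w : 'I_n -> Theta -> R)
  (b : tprof -> mprof) (s : forall i : 'I_n, Theta -> mixed i) (i : 'I_n) (t : Theta) : R :=
  Emi S w i t (fun th => \sum_(T : {set 'I_n}) wgt T * payoff (pi i) (mixT T b s th)).

Definition balanced (S : 'I_n -> seq Theta) (w : 'I_n -> Theta -> R)
  (b : tprof -> mprof) (s : forall i : 'I_n, Theta -> mixed i) :=
  forall (i : 'I_n) (t t' : Theta), t \in S i -> t' \in S i ->
    fitness S w b s i t = fitness S w b s i t'.

Definition mdist (i : 'I_n) (x y : mixed i) : R :=
  \big[Num.max/0]_(a : A i) `|x a - y a|.

(* post-entry population: supports and weights *)
Definition postS (S : 'I_n -> seq Theta) (J : {set 'I_n}) (tt : tprof) (i : 'I_n) : seq Theta :=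
  if i \in J then rcons (S i) (tt i) else S i.

Definition postw (w : 'I_n -> Theta -> R) (J : {set 'I_n}) (tt : tprof) (eps : 'I_n -> R)
  (i : 'I_n) (t : Theta) : R :=
  if i \in J then (if t == tt i then eps i else (1 - eps i) * w i t) else w i t.

Definition nearby (S : 'I_n -> seq Theta) (b : tprof -> mprof) (s : forall i : 'I_n, Theta -> mixed i)
  (S' : 'I_n -> seq Theta) (w' : 'I_n -> Theta -> R) (eta : R)
  (b' : tprof -> mprof) (s' : forall i : 'I_n, Theta -> mixed i) :=
  is_eq S' w' b' s' /\
  forall th, in_supp S th -> forall i : 'I_n,
    mdist (b' th i) (b th i) <= eta /\ mdist (s' i (th i)) (s i (th i)) <= eta.

Definition stable (S : 'I_n -> seq Theta) (w : 'I_n -> Theta -> R)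
  (b : tprof -> mprof) (s : forall i : 'I_n, Theta -> mixed i) :=
  balanced S w b s /\
  forall (J : {set 'I_n}), J != set0 ->
  forall tt : tprof, (forall j, j \in J -> tt j \notin S j) ->
  forall eta : R, 0 < eta ->
  exists etab epsb : R, [/\ 0 <= etab, etab < eta, 0 < epsb & epsb < 1] /\
  forall eps : 'I_n -> R,
    (forall j, j \in J -> 0 < eps j /\ eps j < 1) ->
    0 < \big[Num.max/0]_(j in J) eps j -> \big[Num.max/0]_(j in J) eps j < epsb ->
    (exists b' s', nearby S b s (postS S J tt) (postw w J tt eps) etab b' s') /\
    (forall b' s', nearby S b s (postS S J tt) (postw w J tt eps) etab b' s' ->
       (exists2 j, j \in J & forall t, t \in S j ->
           fitness (postS S J tt) (postw w J tt eps) b' s' j (tt j)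
           < fitness (postS S J tt) (postw w J tt eps) b' s' j t)
       \/
       (forall (i : 'I_n) (t t' : Theta), t \in postS S J tt i -> t' \in postS S J tt i ->
           fitness (postS S J tt) (postw w J tt eps) b' s' i t
           = fitness (postS S J tt) (postw w J tt eps) b' s' i t')).

Definition stable_profile (astar : prof) :=
  exists (S : 'I_n -> seq Theta) (w : 'I_n -> Theta -> R)
         (b : tprof -> mprof) (s : forall i : 'I_n, Theta -> mixed i),
    [/\ (forall i, is_fsdist (S i) (w i)),
        is_eq S w b s,
        stable S w b s &
        forall a : prof, outcome S w b s a = (a == astar)%:R].

End EvoGame.

Definition nash (R : realFieldType) (n : nat) (A : 'I_n -> finType)
  (pi : 'I_n -> {dffun forall i : 'I_n, A i} -> R) (astar : {dffun forall i : 'I_n, A i}) :=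
  forall (i : 'I_n) (a : {dffun forall i : 'I_n, A i}),
    (forall j, j != i -> a j = astar j) -> pi i a <= pi i astar.

(* Suppose player [i] gains by the unilateral deviation [a] from [astar]. In a stable
   configuration with outcome [astar] every incumbent plays [astar] whether it observes or
   not. Let a mutant that cares only about playing [a i] enter population [i]: in any
   nearby equilibrium it plays [a i] whenever it is unobserved. When nobody observes (probability
   (1-p)^n) the mutant thus earns about [pi i a] and the incumbents about [pi i astar],
   while all other observation events have total probability O(p). For small [p] the mutant
   is therefore strictly fitter than every incumbent, which stability forbids. *)

From HB Require Import structures.
From mathcomp Require Import all_boot all_order all_algebra.
From mathcomp Require Import ring lra.
From Stdlib Require Import FunctionalExtensionality.
Set Implicit Arguments. Unset Strict Implicit. Unset Printing Implicit Defensive.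
Import Order.TTheory GRing.Theory Num.Theory.
Local Open Scope ring_scope.

Section MixedProfiles.
Variable R : realFieldType.
Variable n : nat.
Variable A : 'I_n -> finType.
Local Notation prof := {dffun forall i : 'I_n, A i}.
Local Notation mprof := (forall i : 'I_n, {ffun A i -> R}).

Lemma sum_prod_dffun (tau : mprof) :
  \sum_(a : prof) \prod_(j < n) tau j (a j) = \prod_(j < n) \sum_(x : A j) tau j x.
Proof.
transitivity (\prod_(j < n) \sum_(y in tagged_with A j) untag 0 (tau j) y).
  2: by apply: eq_bigr => j _; rewrite (big_tag (fun j x => tau j x)).
rewrite bigA_distr_big_dep -big_fprod.
rewrite (reindex (@fprod_of_dffun _ A)); last exact/onW_bij/fprod_of_dffun_bij.
by apply: eq_bigr => a _; apply: eq_big => // j; rewrite fprodE.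
Qed.

Lemma mixed_ge0 i (x : {ffun A i -> R}) y : is_mixed x -> 0 <= x y.
Proof. by case=> ->. Qed.

Lemma mixed_le1 i (x : {ffun A i -> R}) y : is_mixed x -> x y <= 1.
Proof. by case=> x_ge0 <-; rewrite (bigD1 y) //= lerDl sumr_ge0. Qed.

Lemma mixed_point i (x : {ffun A i -> R}) d :
  is_mixed x -> 1 <= x d -> forall y, x y = (y == d)%:R.
Proof.
move=> mx xd_ge1; have [x_ge0 x_sum1] := mx.
have xd1 : x d = 1 by apply/eqP; rewrite eq_le xd_ge1 mixed_le1.
have rest0 : \sum_(y | y != d) x y = 0.
  by apply/eqP; move: x_sum1; rewrite (bigD1 d) //= xd1 addrC => /eqP; rewrite -subr_eq0 addrK.
move=> y; case: eqVneq => [->|yd]; first by rewrite xd1.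
exact: (psumr_eq0P (fun y _ => x_ge0 y) rest0).
Qed.

Lemma sum_prod_mixed (tau : mprof) : (forall j, is_mixed (tau j)) ->
  \sum_(a : prof) \prod_j tau j (a j) = 1.
Proof. by move=> mx; rewrite sum_prod_dffun big1 // => j _; case: (mx j). Qed.

Lemma prod_mixed_le (tau : mprof) (a : prof) l : (forall j, is_mixed (tau j)) ->
  \prod_j tau j (a j) <= tau l (a l).
Proof.
move=> mx; rewrite (bigD1 l) //= ler_piMr ?mixed_ge0 //.
by apply: prodr_ile1 => j _; rewrite mixed_ge0 ?mixed_le1.
Qed.

Lemma mixed_point_of_prod0 (tau : mprof) (c : prof) : (forall j, is_mixed (tau j)) ->
  (forall a : prof, a != c -> \prod_j tau j (a j) = 0) ->
  forall l x, tau l x = (x == c l)%:R.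
Proof.
move=> mx prod0 l; apply: mixed_point => //.
have prod_c1 : \prod_j tau j (c j) = 1.
  have := sum_prod_mixed mx; rewrite (bigD1 c) //= [X in _ + X]big1 ?addr0 // => a; exact: prod0.
by rewrite -prod_c1; exact: prod_mixed_le.
Qed.

Lemma payoff_dev_dfwith u i (sigma : {ffun A i -> R}) (tau : mprof) :
  payoff_dev u sigma tau = payoff u (dfwith tau sigma).
Proof.
apply: eq_bigr => a _; congr (_ * _).
rewrite [RHS](bigD1 i) //= dfwith_in; congr (_ * _); apply: eq_bigr => j ji.
by rewrite dfwith_out // eq_sym.
Qed.

Definition spread (u : prof -> R) (c : prof) : R := \sum_(a : prof) `|u a - u c|.

Lemma spread_ge0 u c : 0 <= spread u c.
Proof. exact: sumr_ge0. Qed.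

(* Each profile [a != c] has some coordinate off [c], hence probability at most [e]. *)
Lemma payoff_near_pure (u : prof -> R) (tau : mprof) (c : prof) (e : R) :
  (forall j, is_mixed (tau j)) -> (forall l x, x != c l -> tau l x <= e) ->
  `|payoff u tau - u c| <= e * spread u c.
Proof.
move=> mx tau_le.
have -> : payoff u tau - u c = \sum_(a : prof) (\prod_j tau j (a j)) * (u a - u c).
  under eq_bigr do rewrite mulrBr.
  by rewrite sumrB -mulr_suml sum_prod_mixed // mul1r.
rewrite mulr_sumr; apply: (le_trans (ler_norm_sum _ _ _)); apply: ler_sum => a _.
have prod_ge0 : 0 <= \prod_j tau j (a j) by apply: prodr_ge0 => j _; exact: mixed_ge0.
rewrite normrM (ger0_norm prod_ge0).
have [->|ac] := eqVneq a c; first by rewrite subrr normr0 !mulr0.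
rewrite ler_wpM2r //.
have [l al] : exists l, a l != c l.
  apply/existsP; apply: contraNT ac => /existsPn same.
  by apply/eqP/ffunP => l; exact/eqP/negPn/same.
exact: le_trans (prod_mixed_le a l mx) (tau_le l _ al).
Qed.

Lemma point_mixed i (d : A i) : is_mixed [ffun x => (x == d)%:R : R].
Proof.
split=> [x|]; first by rewrite ffunE ler0n.
rewrite (bigD1 d) //= ffunE eqxx big1 ?addr0 // => x xd.
by rewrite ffunE (negbTE xd).
Qed.

Lemma payoff_indicator (u : prof -> R) (c : R) i d (tau : mprof) :
  (forall a, u a = c * (a i == d)%:R) -> (forall j, is_mixed (tau j)) ->
  payoff u tau = c * tau i d.
Proof.
move=> uE mx.
pose tau' := dfwith tau [ffun x => tau i x * (x == d)%:R].
have termE (a : prof) : (\prod_j tau j (a j)) * u a = c * \prod_j tau' j (a j).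
  rewrite uE (bigD1 i) //= [in RHS](bigD1 i) //= /tau' dfwith_in ffunE.
  rewrite [in RHS](eq_bigr (fun j => tau j (a j))); first by ring.
  by move=> j ji; rewrite dfwith_out // eq_sym.
rewrite /payoff (eq_bigr _ (fun a _ => termE a)) -mulr_sumr sum_prod_dffun; congr (_ * _).
rewrite (bigD1 i) //= [X in _ * X]big1 ?mulr1.
  rewrite /tau' dfwith_in (bigD1 d) //= ffunE eqxx mulr1 big1 ?addr0 // => y yd.
  by rewrite ffunE (negbTE yd) mulr0.
by move=> j ji; rewrite /tau' dfwith_out 1?eq_sym //; case: (mx j).
Qed.

Lemma mdist_point_le i (x z : {ffun A i -> R}) d e :
  (forall y, z y = (y == d)%:R) -> mdist x z <= e -> forall y, y != d -> x y <= e.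
Proof.
move=> zE /bigmax_leP[_ dist_le] y yd.
by have := dist_le y isT; rewrite zE (negbTE yd) subr0; apply: le_trans; exact: ler_norm.
Qed.

End MixedProfiles.

Lemma sumr_gt0 (R : numDomainType) (I : finType) (P : pred I) (F : I -> R) :
  (exists k, P k) -> (forall k, P k -> 0 < F k) -> 0 < \sum_(k | P k) F k.
Proof.
move=> [k Pk] F_gt0; rewrite (bigD1 k) //= ltr_wpDr ?F_gt0 //.
by apply: sumr_ge0 => l /andP[Pl _]; exact/ltW/F_gt0.
Qed.

Section DffunUpdate.
Variables (I : finType) (T : I -> finType).
Local Notation dprod := {dffun forall j, T j}.

Definition upd (k : dprod) i (y : T i) : dprod := [ffun j => dfwith (fun j => k j) y j].

Lemma upd_in k i (y : T i) : upd k y i = y.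
Proof. by rewrite ffunE dfwith_in. Qed.

Lemma upd_out k i (y : T i) j : i != j -> upd k y j = k j.
Proof. by move=> ij; rewrite ffunE dfwith_out. Qed.

Lemma upd_upd k i (x y : T i) : upd (upd k y) x = upd k x.
Proof.
apply/ffunP => j; have [<-|ij] := eqVneq i j; first by rewrite !upd_in.
by rewrite !upd_out.
Qed.

Lemma upd_id k i : upd k (k i) = k.
Proof.
apply/ffunP => j; have [<-|ij] := eqVneq i j; first by rewrite upd_in.
by rewrite upd_out.
Qed.

Lemma big_coord_upd (V : nmodType) (F : dprod -> V) i (x y : T i) :
  \sum_(k : dprod | k i == x) F k = \sum_(k : dprod | k i == y) F (upd k x).
Proof.
rewrite (reindex_onto (fun k => upd k x) (fun k => upd k y)) /=; last first.
  by move=> k /eqP <-; rewrite upd_upd upd_id.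
apply: eq_bigl => k; rewrite upd_in eqxx /= upd_upd.
by apply/eqP/eqP => [<-|<-]; rewrite ?upd_in ?upd_id.
Qed.

End DffunUpdate.

Section Populations.
Variable R : realFieldType.
Variable n : nat.
Variable A : 'I_n -> finType.
Local Notation prof := {dffun forall i : 'I_n, A i}.
Local Notation Theta := {ffun prof -> R}.
Local Notation tprof := ('I_n -> Theta).
Local Notation mprof := (forall i : 'I_n, {ffun A i -> R}).
Local Notation strat := (forall i : 'I_n, Theta -> {ffun A i -> R}).
Local Notation index_prof S := {dffun forall j, 'I_(size (S j))}.

Lemma prof_of_in_supp (S : 'I_n -> seq Theta) (k : index_prof S) : in_supp S (prof_of k).
Proof. by move=> j; rewrite mem_nth. Qed.

Lemma in_supp_prof_of (S : 'I_n -> seq Theta) th :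
  in_supp S th -> exists k : index_prof S, prof_of k = th.
Proof.
move=> th_in.
have idx_lt j : (index (th j) (S j) < size (S j))%N by rewrite index_mem.
exists [ffun j => Ordinal (idx_lt j)].
by apply: functional_extensionality => j; rewrite /prof_of ffunE nth_index.
Qed.

Lemma wgt_gt0 (p : R) (T : {set 'I_n}) : 0 < p -> p < 1 -> 0 < wgt p T.
Proof. by move=> p0 p1; rewrite mulr_gt0 // exprn_gt0 // subr_gt0. Qed.

Lemma wgt1_gt0 (p : R) (T : {set 'I_n}) : 0 < p -> p < 1 -> 0 < wgt1 p T.
Proof. by move=> p0 p1; rewrite mulr_gt0 // exprn_gt0 // subr_gt0. Qed.

Lemma mixT_mixed (p : R) S w (b : tprof -> mprof) (s : strat) th T j :
  is_eq p S w b s -> in_supp S th -> is_mixed (mixT T b s th j).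
Proof.
move=> [b_opt s_opt] th_in; rewrite /mixT; case: ifP => _.
  exact: (s_opt j (th j) (th_in j)).1.
exact: (b_opt th th_in j).1.
Qed.

Lemma index_prof_with (S : 'I_n -> seq Theta) i (x : 'I_(size (S i))) :
  (forall j, (0 < size (S j))%N) -> exists k : index_prof S, k i = x.
Proof. by move=> S_ne; exists (upd [ffun j => Ordinal (S_ne j)] x); rewrite upd_in. Qed.

Lemma Emi_gt0 (S : 'I_n -> seq Theta) w i t (g : tprof -> R) :
  (forall j, (0 < size (S j))%N) ->
  (forall j u, j != i -> u \in S j -> 0 < w j u) ->
  t \in S i -> (forall th, in_supp S th -> 0 < g th) -> 0 < Emi S w i t g.
Proof.
move=> S_ne w_gt0 tS g_gt0; apply: sumr_gt0.
  have [k ki] := index_prof_with (Ordinal (etrans (index_mem t (S i)) tS)) S_ne.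
  by exists k; rewrite ki.
move=> k _; apply: mulr_gt0; last exact/g_gt0/prof_of_in_supp.
by apply: prodr_gt0 => j ji; apply: w_gt0 ji _; exact: prof_of_in_supp.
Qed.

(* Population [i]'s conditional expectation is monotone under the coupling that
   replaces the own type [t] by [t'] and keeps the opponents' types. *)
Lemma Emi_lt (S : 'I_n -> seq Theta) w i t t' (g : tprof -> R) :
  (forall j, (0 < size (S j))%N) ->
  (forall j u, j != i -> u \in S j -> 0 < w j u) ->
  t \in S i -> t' \in S i ->
  (forall th th', in_supp S th -> th i = t -> th' i = t' ->
     (forall j, j != i -> th' j = th j) -> g th' < g th) ->
  Emi S w i t' g < Emi S w i t g.
Proof.
move=> S_ne w_gt0 tS t'S g_lt.
pose x : 'I_(size (S i)) := Ordinal (etrans (index_mem t (S i)) tS).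
pose x' : 'I_(size (S i)) := Ordinal (etrans (index_mem t' (S i)) t'S).
rewrite /Emi [X in X < _](eq_bigl (fun k : index_prof S => k i == x')) //.
rewrite [X in _ < X](eq_bigl (fun k : index_prof S => k i == x)) //.
rewrite (big_coord_upd _ x' x) -subr_gt0 -sumrB; apply: sumr_gt0.
  by have [k ki] := index_prof_with x S_ne; exists k; rewrite ki.
move=> k /eqP kx.
have other_upd j : j != i -> prof_of (upd k x') j = prof_of k j.
  by move=> ji; rewrite /prof_of upd_out // eq_sym.
rewrite (eq_bigr _ (fun j ji => congr1 (w j) (other_upd j ji))) -mulrBr.
rewrite mulr_gt0 ?subr_gt0 ?prodr_gt0 //.
  by move=> j ji; apply: w_gt0 ji _; exact: prof_of_in_supp.
apply: g_lt other_upd; first exact: prof_of_in_supp.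
  by rewrite /prof_of kx nth_index.
by rewrite /prof_of upd_in nth_index.
Qed.

Lemma outcome_eq0 (p : R) S w (b : tprof -> mprof) (s : strat) (a : prof) th T :
  0 < p -> p < 1 -> (forall j u, u \in S j -> 0 < w j u) -> is_eq p S w b s ->
  outcome p S w b s a = 0 -> in_supp S th -> \prod_j mixT T b s th j (a j) = 0.
Proof.
move=> p0 p1 w_gt0 eq_bs out0 th_in.
have prod_ge0 th' T' : in_supp S th' -> 0 <= \prod_j mixT T' b s th' j (a j).
  by move=> th'_in; apply: prodr_ge0 => j _; exact/mixed_ge0/(mixT_mixed _ _ eq_bs th'_in).
have [k <-] := in_supp_prof_of th_in.
have weight_gt0 (k' : index_prof S) : 0 < \prod_j w j (prof_of k' j).
  by apply: prodr_gt0 => j _; apply: w_gt0; exact: prof_of_in_supp.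
have summand_ge0 th' T' : in_supp S th' ->
    0 <= wgt p T' * \prod_j mixT T' b s th' j (a j).
  by move=> th'_in; rewrite mulr_ge0 ?prod_ge0 // ltW ?wgt_gt0.
have /eqP : (\prod_j w j (prof_of k j)) *
    \sum_(T' : {set 'I_n}) wgt p T' * \prod_j mixT T' b s (prof_of k) j (a j) = 0.
  apply: (psumr_eq0P _ out0) => // k' _.
  apply: mulr_ge0; first exact/ltW.
  by apply: sumr_ge0 => T' _; apply: summand_ge0; exact: prof_of_in_supp.
rewrite mulf_eq0 gt_eqF //= => /eqP sumT0.
have /eqP := psumr_eq0P (fun T' _ => summand_ge0 _ T' (prof_of_in_supp k)) sumT0 (i := T) isT.
by rewrite mulf_eq0 gt_eqF ?wgt_gt0 //= => /eqP.
Qed.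

Lemma pure_before_entry (p : R) S w (b : tprof -> mprof) (s : strat) (astar : prof) :
  0 < p -> p < 1 -> (forall j u, u \in S j -> 0 < w j u) -> is_eq p S w b s ->
  (forall a, outcome p S w b s a = (a == astar)%:R) ->
  forall th, in_supp S th -> forall j x,
    b th j x = (x == astar j)%:R /\ s j (th j) x = (x == astar j)%:R.
Proof.
move=> p0 p1 w_gt0 eq_bs out_pt th th_in j x.
have point T : mixT T b s th j x = (x == astar j)%:R.
  apply: (mixed_point_of_prod0 (fun l => mixT_mixed _ _ eq_bs th_in)) => a a_ne.
  by apply: outcome_eq0 p0 p1 w_gt0 eq_bs _ th_in; rewrite out_pt (negbTE a_ne).
by have := point set0; have := point setT; rewrite /mixT in_set0 in_setT.
Qed.

End Populations.

Section DominantType.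
Variable R : realFieldType.
Variable n : nat.
Variable A : 'I_n -> finType.
Local Notation prof := {dffun forall i : 'I_n, A i}.
Local Notation Theta := {ffun prof -> R}.
Local Notation tprof := ('I_n -> Theta).
Local Notation mprof := (forall i : 'I_n, {ffun A i -> R}).
Local Notation strat := (forall i : 'I_n, Theta -> {ffun A i -> R}).

Definition dominant_type (c : R) i (ai : A i) : Theta := [ffun a : prof => c * (a i == ai)%:R].

Lemma dominant_type_notin (ts : seq Theta) i (a : prof) :
  exists2 c, 0 < c & dominant_type c (a i) \notin ts.
Proof.
pose c := 1 + \sum_(t <- ts) `|t a|.
have c_gt0 : 0 < c by rewrite ltr_wpDr // sumr_ge0.
exists c => //; apply/negP => dom_in.
have : `|dominant_type c (a i) a| <= \sum_(t <- ts) `|t a|.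
  by rewrite (big_rem _ dom_in) /= lerDl sumr_ge0.
by rewrite ffunE eqxx mulr1 gtr0_norm // /c; lra.
Qed.

Lemma dominant_type_plays (p : R) S w (b : tprof -> mprof) (s : strat) i c (ai : A i) :
  0 < p -> p < 1 -> 0 < c -> (forall j, (0 < size (S j))%N) ->
  (forall j u, j != i -> u \in S j -> 0 < w j u) -> is_eq p S w b s ->
  dominant_type c ai \in S i ->
  forall x, s i (dominant_type c ai) x = (x == ai)%:R.
Proof.
move=> p0 p1 c0 S_ne w_gt0 eq_bs tS.
set t := dominant_type c ai.
pose W1 := \sum_(T : {set 'I_n} | i \notin T) wgt1 p T.
have W1_gt0 : 0 < W1.
  by apply: sumr_gt0 => [|T _]; [exists set0; rewrite in_set0 | exact: wgt1_gt0].
have Vb_dom th sigma : in_supp S th -> th i = t -> is_mixed sigma ->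
    Vb p b s th sigma = sigma ai * (c * W1).
  move=> th_in thi ms; rewrite /Vb /W1 !mulr_sumr; apply: eq_bigr => T iT.
  rewrite payoff_dev_dfwith (payoff_indicator (c := c) (d := ai)) ?dfwith_in.
  - by ring.
  - by move=> a; rewrite thi ffunE.
  move=> j; have [<-|ij] := eqVneq i j; first by rewrite dfwith_in.
  by rewrite dfwith_out //; exact: mixT_mixed eq_bs th_in.
pose E := Emi S w i t (fun _ => c * W1).
have E_gt0 : 0 < E by apply: Emi_gt0 => // th _; rewrite mulr_gt0.
have Vs_dom sigma : is_mixed sigma -> Vs p S w b s t sigma = sigma ai * E.
  move=> ms; rewrite /Vs /E /Emi mulr_sumr; apply: eq_bigr => k /eqP ki.
  rewrite Vb_dom //; first by rewrite mulrCA.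
    exact: prof_of_in_supp.
  by rewrite /prof_of ki nth_index.
have [s_mixed s_opt] := eq_bs.2 i t tS.
apply: mixed_point => //.
have := s_opt _ (point_mixed R ai); rewrite !Vs_dom //; last exact: point_mixed.
by rewrite ffunE eqxx mul1r -[X in X <= _ -> _]mul1r ler_pM2r.
Qed.

End DominantType.

Section ObservationAverages.
Variable R : realFieldType.
Variable n : nat.
Variable A : 'I_n -> finType.
Local Notation prof := {dffun forall i : 'I_n, A i}.
Local Notation mprof := (forall i : 'I_n, {ffun A i -> R}).
Variable p : R.
Hypotheses (p_gt0 : 0 < p) (p_lt1 : p < 1).

Definition obs_payoff (u : prof -> R) (tau : {set 'I_n} -> mprof) : R :=
  \sum_(T : {set 'I_n}) wgt p T * payoff u (tau T).

Lemma wgt_setT : wgt p [set: 'I_n] = (1 - p) ^+ n.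
Proof. by rewrite /wgt cardsT card_ord subnn expr0 mul1r. Qed.

Lemma wgt_proper_le T : T != [set: 'I_n] -> wgt p T <= p.
Proof.
move=> T_proper; have : (#|T| < n)%N.
  rewrite ltn_neqAle; have := max_card (mem T); rewrite card_ord => ->; rewrite andbT.
  by apply: contraNneq T_proper => cardT; rewrite eqEcard subsetT cardsT card_ord cardT leqnn.
rewrite -subn_gt0 /wgt => /prednK <-; rewrite exprS -mulrA -[leRHS]mulr1.
have q_ge0 : 0 <= 1 - p by rewrite subr_ge0 ltW.
have q_le1 : 1 - p <= 1 by rewrite lerBlDr lerDl ltW.
apply: ler_wpM2l; first exact: ltW.
apply: mulr_ile1; rewrite ?exprn_ge0 ?exprn_ile1 ?(ltW p_gt0) ?(ltW p_lt1) //.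
Qed.

Lemma sum_wgt_proper_le :
  \sum_(T : {set 'I_n} | T != [set: 'I_n]) wgt p T <= #|{set 'I_n}|%:R * p.
Proof.
apply: le_trans (_ : \sum_(T : {set 'I_n}) p <= _); last by rewrite sumr_const mulr_natl.
apply: le_trans (_ : \sum_(T : {set 'I_n} | T != [set: 'I_n]) p <= _).
  by apply: ler_sum => T; exact: wgt_proper_le.
rewrite [X in _ <= X](bigID (fun T => T != [set: 'I_n])) /= lerDl.
by apply: sumr_ge0 => T _; exact: ltW.
Qed.

Lemma obs_payoff_le (u : prof -> R) (tau : {set 'I_n} -> mprof) (c : prof) e :
  (forall T j, is_mixed (tau T j)) -> (forall T l x, x != c l -> tau T l x <= e) ->
  obs_payoff u tau <= (\sum_(T : {set 'I_n}) wgt p T) * (u c + e * spread u c).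
Proof.
move=> mx tau_le; rewrite mulr_suml; apply: ler_sum => T _.
apply: ler_wpM2l; first exact/ltW/wgt_gt0.
by rewrite -lerBlDl; exact: le_trans (ler_norm _) (payoff_near_pure u (mx T) (tau_le T)).
Qed.

Lemma obs_payoff_ge (u : prof -> R) (tau : {set 'I_n} -> mprof) (c : prof) e :
  (forall T j, is_mixed (tau T j)) -> (forall l x, x != c l -> tau [set: 'I_n] l x <= e) ->
  wgt p [set: 'I_n] * (u c - e * spread u c)
    + (\sum_(T : {set 'I_n} | T != [set: 'I_n]) wgt p T) * (u c - spread u c)
  <= obs_payoff u tau.
Proof.
have payoff_ge T e' : (forall l x, x != c l -> tau T l x <= e') ->
    (forall j, is_mixed (tau T j)) -> u c - e' * spread u c <= payoff u (tau T).
  move=> tau_le mx; rewrite lerBlDr -lerBlDl.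
  by have := payoff_near_pure u mx tau_le; rewrite ler_norml => /andP[+ _]; rewrite lerNl opprB.
move=> mx tauT_le; rewrite /obs_payoff [X in _ <= X](bigD1 [set: 'I_n]) //= mulr_suml.
apply: lerD.
  by apply: ler_wpM2l; [exact/ltW/wgt_gt0 | exact: payoff_ge].
apply: ler_sum => T _; apply: ler_wpM2l; first exact/ltW/wgt_gt0.
rewrite -[X in u c - X]mul1r; apply: payoff_ge => // l x _; exact: mixed_le1 (mx T l).
Qed.

End ObservationAverages.

(* [X] and [Y] weigh the event where nobody observes and all other observation events;
   [us] and [ua] are the payoffs at [astar] and at the deviation [a]. *)
Lemma payoff_gap_gt0 (R : realFieldType) (X Y us ua K1 K2 e h : R) :
  us < ua -> 0 <= K1 -> 0 <= K2 -> 0 <= e -> e <= 1 -> 2 * e * (K1 + K2) <= ua - us ->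
  h <= X -> 0 <= Y -> 2 * Y * (K1 + K2) < h * (ua - us) ->
  (X + Y) * (us + e * K1) < X * (ua - e * K2) + Y * (ua - K2).
Proof.
move=> us_lt K1_ge0 K2_ge0 e_ge0 e_le1 e_small hX Y_ge0 Y_small.
have d_gt0 : 0 < ua - us by rewrite subr_gt0.
have h_gt0 : 0 < h.
  rewrite -(pmulr_lgt0 _ d_gt0); apply: le_lt_trans Y_small.
  by rewrite !mulr_ge0 ?addr_ge0.
have X_part : h * (ua - us) / 2 <= X * (ua - us - e * (K1 + K2)).
  have : h * ((ua - us) / 2) <= X * ((ua - us) / 2) by apply: ler_wpM2r; lra.
  have : X * ((ua - us) / 2) <= X * (ua - us - e * (K1 + K2)).
    by apply: ler_wpM2l; lra.
  lra.
have Y_part : - (Y * (K1 + K2)) <= Y * (ua - us - K2 - e * K1).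
  have eK1 : e * K1 <= K1 by rewrite ler_piMl.
  by rewrite -mulrN; apply: ler_wpM2l => //; lra.
rewrite -subr_gt0; have -> : X * (ua - e * K2) + Y * (ua - K2) - (X + Y) * (us + e * K1)
    = X * (ua - us - e * (K1 + K2)) + Y * (ua - us - K2 - e * K1) by ring.
lra.
Qed.

Section ProfitableDeviation.
Variable R : realFieldType.
Variable n : nat.
Variable A : 'I_n -> finType.
Local Notation prof := {dffun forall i : 'I_n, A i}.
Local Notation Theta := {ffun prof -> R}.
Local Notation tprof := ('I_n -> Theta).
Local Notation mprof := (forall i : 'I_n, {ffun A i -> R}).
Local Notation strat := (forall i : 'I_n, Theta -> {ffun A i -> R}).
Variables (pi : 'I_n -> prof -> R) (astar : prof) (i : 'I_n) (a : prof).
Hypothesis a_unilateral : forall j, j != i -> a j = astar j.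
Hypothesis a_profitable : pi i astar < pi i a.

Let gain := pi i a - pi i astar.
Let K := spread (pi i) astar + spread (pi i) a.
Let h : R := 2^-1 ^+ n.
Let N : R := #|{set 'I_n}|%:R.

Lemma gain_gt0 : 0 < gain. Proof. by rewrite subr_gt0. Qed.
Lemma K_ge0 : 0 <= K. Proof. by rewrite addr_ge0 ?spread_ge0. Qed.
Lemma h_gt0 : 0 < h. Proof. by rewrite exprn_gt0 // invr_gt0. Qed.
Lemma N_ge0 : 0 <= N. Proof. exact: ler0n. Qed.

(* Below this threshold [(1 - p)^n >= h] while the events where someone observes weigh
   at most [N * p] in total. *)
Definition deviation_threshold : R := Num.min 2^-1 (h * gain / (2 * (N * K + 1))).

Lemma deviation_threshold_gt0 : 0 < deviation_threshold.
Proof.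
rewrite lt_min invr_gt0 ltr0n divr_gt0 ?mulr_gt0 ?h_gt0 ?gain_gt0 //.
by rewrite ltr_pwDr ?mulr_ge0 ?N_ge0 ?K_ge0.
Qed.

Lemma deviation_threshold_lt1 : deviation_threshold < 1.
Proof. by apply: le_lt_trans (_ : 2^-1 < 1); rewrite ?ge_min ?lexx ?invf_lt1 ?ltr1n. Qed.

Lemma deviation_threshold_small p : 0 < p -> p < deviation_threshold ->
  h <= wgt p [set: 'I_n] /\ 2 * (N * p) * K < h * gain.
Proof.
move=> p0; rewrite lt_min => /andP[p_half p_small]; split.
  by rewrite wgt_setT; apply: lerXn2r; rewrite ?nnegrE; lra.
have NK_ge0 : 0 <= N * K by rewrite mulr_ge0 ?N_ge0 ?K_ge0.
move: p_small; rewrite ltr_pdivlMr ?mulr_gt0 ?ltr_pwDr //.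
have := h_gt0; have := gain_gt0; nra.
Qed.

Lemma obs_payoff_deviation_lt p e (tau tau' : {set 'I_n} -> mprof) :
  0 < p -> p < deviation_threshold -> 0 <= e -> e <= 1 -> 2 * e * K <= gain ->
  (forall T j, is_mixed (tau T j)) -> (forall T j, is_mixed (tau' T j)) ->
  (forall T l x, x != astar l -> tau' T l x <= e) ->
  (forall l x, x != a l -> tau [set: 'I_n] l x <= e) ->
  obs_payoff p (pi i) tau' < obs_payoff p (pi i) tau.
Proof.
move=> p0 p_lt e_ge0 e_le1 e_small mx mx' tau'_near tau_near.
have p1 : p < 1 := lt_trans p_lt deviation_threshold_lt1.
have [h_le Y_small] := deviation_threshold_small p0 p_lt.
apply: le_lt_trans (obs_payoff_le p0 p1 (pi i) mx' tau'_near) _.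
apply: lt_le_trans _ (obs_payoff_ge p0 p1 (pi i) mx tau_near).
rewrite (bigD1 [set: 'I_n]) //=.
apply: payoff_gap_gt0 h_le _ _ => //; rewrite ?spread_ge0 //.
  by apply: sumr_ge0 => T _; exact/ltW/wgt_gt0.
apply: le_lt_trans Y_small; apply: ler_wpM2r; first exact: K_ge0.
by apply: ler_wpM2l => //; exact: sum_wgt_proper_le.
Qed.

Section MutantEntry.
Variables (p : R) (S : 'I_n -> seq Theta) (w : 'I_n -> Theta -> R).
Variables (b : tprof -> mprof) (s : strat) (c : R) (eps : 'I_n -> R).
Hypotheses (p_gt0 : 0 < p) (p_lt : p < deviation_threshold) (c_gt0 : 0 < c).
Hypothesis S_ne : forall j, (0 < size (S j))%N.
Hypothesis w_gt0 : forall j u, u \in S j -> 0 < w j u.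
Hypothesis pure_play : forall th, in_supp S th -> forall j x,
  b th j x = (x == astar j)%:R /\ s j (th j) x = (x == astar j)%:R.

Local Notation mutant := (dominant_type c (a i)).
Local Notation S' := (postS S [set i] (fun=> mutant)).
Local Notation w' := (postw w [set i] (fun=> mutant) eps).

Lemma mutant_outperforms e (b' : tprof -> mprof) (s' : strat) t0 :
  0 <= e -> e <= 1 -> 2 * e * K <= gain -> t0 \in S i -> nearby p S b s S' w' e b' s' ->
  fitness pi p S' w' b' s' i t0 < fitness pi p S' w' b' s' i mutant.
Proof.
move=> e_ge0 e_le1 e_small t0S [eq' near].
have p1 : p < 1 := lt_trans p_lt deviation_threshold_lt1.
have S'i : S' i = rcons (S i) mutant by rewrite /postS set11.
have S'j j : j != i -> S' j = S j by move=> ji; rewrite /postS in_set1 (negbTE ji).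
have S'_ne j : (0 < size (S' j))%N.
  by have [->|/S'j->] := eqVneq j i; rewrite ?S'i ?size_rcons.
have w'_gt0 j u : j != i -> u \in S' j -> 0 < w' j u.
  by move=> ji; rewrite S'j // /postw in_set1 (negbTE ji); exact: w_gt0.
have mutant_in : mutant \in S' i by rewrite S'i mem_rcons mem_head.
have t0_in : t0 \in S' i by rewrite S'i mem_rcons in_cons t0S orbT.
have mutant_plays := dominant_type_plays p_gt0 p1 c_gt0 S'_ne w'_gt0 eq' mutant_in.
have close th j x : in_supp S th -> x != astar j -> b' th j x <= e /\ s' j (th j) x <= e.
  move=> th_in x_ne; have [near_b near_s] := near th th_in j.
  split; [apply: mdist_point_le near_b x x_ne | apply: mdist_point_le near_s x x_ne];
    by move=> y; have [] := pure_play th_in y.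
apply: Emi_lt => // th th' th_in thi th'i th'_other.
have th'_in : in_supp S th'.
  move=> j; have [->|ji] := eqVneq j i; first by rewrite th'i.
  by rewrite th'_other // -(S'j j ji); exact: th_in.
have th'_in' : in_supp S' th'.
  move=> j; have [->|ji] := eqVneq j i; first by rewrite th'i.
  by rewrite S'j //; exact: th'_in.
apply: (obs_payoff_deviation_lt (tau := fun T => mixT T b' s' th)
  (tau' := fun T => mixT T b' s' th') p_gt0 p_lt e_ge0 e_le1 e_small)
  => [T j|T j|T l x x_ne|l x x_ne].
- exact: mixT_mixed eq' th_in.
- exact: mixT_mixed eq' th'_in'.
- by rewrite /mixT; case: ifP => _; have [] := close th' l x th'_in x_ne.
rewrite /mixT in_setT; have [il|li] := eqVneq i l.
  by subst l; rewrite thi mutant_plays (negbTE x_ne).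
have x_ne' : x != astar l by rewrite -a_unilateral // eq_sym.
by rewrite -th'_other 1?eq_sym //; have [] := close th' l x th'_in x_ne'.
Qed.

End MutantEntry.

Lemma bigmax_set1 (F : 'I_n -> R) : 0 <= F i -> \big[Num.max/0]_(j in [set i]) F j = F i.
Proof. by move=> F_ge0; rewrite -big_enum enum_set1 big_cons big_nil /= max_l. Qed.

Lemma not_stable_below_threshold p :
  0 < p -> p < deviation_threshold -> ~ stable_profile pi p astar.
Proof.
move=> p0 p_lt [S [w [b [s [fs eq_bs [_ stab] out_pt]]]]].
have p1 : p < 1 := lt_trans p_lt deviation_threshold_lt1.
have w_gt0 j u : u \in S j -> 0 < w j u by case: (fs j) => _ + _; apply.
have S_ne j : (0 < size (S j))%N.
  by case: (fs j) => _ _; case: (S j) => //=; rewrite big_nil => /eqP; rewrite eq_sym oner_eq0.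
have pure := pure_before_entry p0 p1 w_gt0 eq_bs out_pt.
have [c c_gt0 mutant_new] := dominant_type_notin (S i) i a.
pose t0 := nth (th0 R A) (S i) 0; have t0S : t0 \in S i by rewrite mem_nth.
(* Within [eta] of pure play, payoffs move by less than half the gain. *)
pose eta := Num.min 1 (gain / (2 * (K + 1))).
have den_gt0 : 0 < 2 * (K + 1) by rewrite mulr_gt0 // ltr_pwDr ?K_ge0.
have eta_gt0 : 0 < eta by rewrite lt_min ltr01 divr_gt0 ?gain_gt0.
have mutant_out j : j \in [set i] -> dominant_type c (a i) \notin S j by move=> /set1P->.
have J_ne : [set i] != set0 by apply/set0Pn; exists i; rewrite set11.
have [e [eps_b [[e_ge0 e_lt eps_b_gt0 eps_b_lt1] post]]] :=
  stab [set i] J_ne (fun=> dominant_type c (a i)) mutant_out eta eta_gt0.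
have [e_le1 e_small] : e <= 1 /\ 2 * e * K <= gain.
  move: e_lt; rewrite lt_min ltr_pdivlMr // => /andP[? ?].
  by split; [exact: ltW | have := K_ge0; nra].
have eps_in j : j \in [set i] -> 0 < eps_b / 2 /\ eps_b / 2 < 1 by move=> _; split; lra.
have eps_max : \big[Num.max/0]_(j in [set i]) (fun=> eps_b / 2) j = eps_b / 2.
  by rewrite bigmax_set1 // divr_ge0 ?ltW.
have max_gt0 : 0 < \big[Num.max/0]_(j in [set i]) (fun=> eps_b / 2) j by rewrite eps_max; lra.
have max_lt : \big[Num.max/0]_(j in [set i]) (fun=> eps_b / 2) j < eps_b by rewrite eps_max; lra.
have [[b' [s' near]] verdict] := post _ eps_in max_gt0 max_lt.
have better := mutant_outperforms p0 p_lt c_gt0 S_ne w_gt0 pure e_ge0 e_le1 e_small t0S near.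
case: (verdict b' s' near) => [[j /set1P -> worse] | equal].
  by have := worse t0 t0S; rewrite ltNge (ltW better).
move: better; rewrite (equal i _ t0) ?ltxx // /postS set11 mem_rcons ?mem_head //.
by rewrite in_cons t0S orbT.
Qed.

End ProfitableDeviation.

Theorem mainTheorem15 (R : realFieldType) (n : nat) (A : 'I_n -> finType)
  (pi : 'I_n -> {dffun forall i : 'I_n, A i} -> R)
  (astar : {dffun forall i : 'I_n, A i}) :
  (forall pbar : R, 0 < pbar -> pbar < 1 ->
     exists p : R, 0 < p /\ p < pbar /\ stable_profile pi p astar) ->
  nash pi astar.
Proof.
move=> stable_near0 i a a_unilateral; rewrite leNgt; apply/negP => a_profitable.
have [p [p_gt0 [p_lt p_stable]]] := stable_near0 _
  (deviation_threshold_gt0 a_profitable) (deviation_threshold_lt1 pi astar i a).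
exact: (not_stable_below_threshold a_unilateral a_profitable p_gt0 p_lt p_stable).
Qed.
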